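(* Let $(X,p_X)$ be a non-empty partial metric space. Then there exist a p-Cauchy completion $(\tilde X,j)$ of $X$, a p-Cauchy complete partial metric space $Y$, and an isometric embedding $f\colon X\to Y$ such that there is no isometric embedding $\tilde f\colon\tilde X\to Y$ with $\tilde f\circ j=f$.
   Context: A partial metric on a set $X$ is a function $p_X\colon X\times X\to\mathbb{R}_{\geq0}$ such that for all $x,y,z\in X$: (P1) $p_X(x,x)=p_X(x,y)=p_X(y,y)$ implies $x=y$; (P2) $p_X(x,x)\leq p_X(x,y)$; (P3) $p_X(x,y)=p_X(y,x)$; (P4) $p_X(x,z)+p_X(y,y)\leq p_X(x,y)+p_X(y,z)$. For $x\in X$ and $\varepsilon>0$, $B_\varepsilon(x)=\{y\in X: p_X(x,y)<p_X(x,x)+\varepsilon\}$. A subset $A\subseteq X$ is dense in $X$ if for every $x\in X$ and $\varepsilon>0$ there is $y\in A$ with $y\in B_\varepsilon(x)$. A sequence $(x_n)$ in $X$ p-converges to $x\in X$ if $p_X(x,x)=\lim_{n}p_X(x,x_n)=\lim_{n}p_X(x_n,x_n)$; it is p-Cauchy if $\lim_{n,m\to\infty}p_X(x_n,x_m)$ exists and is finite. $X$ is p-Cauchy complete if every p-Cauchy sequence p-converges. An isometric embedding $i\colon X\to Y$ is a map with $p_Y(i(x),i(y))=p_X(x,y)$ for all $x,y$. A p-Cauchy completion of $X$ is a pair $(\bar X,i)$ where $\bar X$ is a p-Cauchy complete partial metric space and $i\colon X\to\bar X$ is an isometric embedding with $i(X)$ dense in $\bar X$. *)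

From Stdlib Require Import Reals.
Open Scope R_scope.

Definition is_partial_metric {X : Type} (p : X -> X -> R) : Prop :=
  (forall x y, 0 <= p x y) /\
  (forall x y, p x x = p x y -> p x y = p y y -> x = y) /\
  (forall x y, p x x <= p x y) /\
  (forall x y, p x y = p y x) /\
  (forall x y z, p x z + p y y <= p x y + p y z).

Definition pball {X : Type} (p : X -> X -> R) (x : X) (eps : R) (y : X) : Prop :=
  p x y < p x x + eps.

Definition pdense {X : Type} (p : X -> X -> R) (A : X -> Prop) : Prop :=
  forall x eps, 0 < eps -> exists y, A y /\ pball p x eps y.

Definition p_converges {X : Type} (p : X -> X -> R) (u : nat -> X) (x : X) : Prop :=
  Un_cv (fun n => p x (u n)) (p x x) /\ Un_cv (fun n => p (u n) (u n)) (p x x).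

Definition p_Cauchy {X : Type} (p : X -> X -> R) (u : nat -> X) : Prop :=
  exists a : R, forall eps, 0 < eps -> exists N : nat,
    forall n m, (N <= n)%nat -> (N <= m)%nat -> Rabs (p (u n) (u m) - a) < eps.

Definition p_Cauchy_complete {X : Type} (p : X -> X -> R) : Prop :=
  forall u : nat -> X, p_Cauchy p u -> exists x, p_converges p u x.

Definition isometric_embedding {X Y : Type} (pX : X -> X -> R) (pY : Y -> Y -> R)
  (i : X -> Y) : Prop :=
  forall x y, pY (i x) (i y) = pX x y.

Definition is_p_Cauchy_completion {X Xb : Type} (pX : X -> X -> R) (pXb : Xb -> Xb -> R)
  (i : X -> Xb) : Prop :=
  is_partial_metric pXb /\ p_Cauchy_complete pXb /\ isometric_embedding pX pXb i /\
  pdense pXb (fun z => exists x, i x = z).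

From Stdlib Require Import Reals Lra Lia Classical ClassicalEpsilon ProofIrrelevance
  FunctionalExtensionality.
Open Scope R_scope.

(* A partial metric p is the same thing as a metric d(x,y) = 2p(x,y) - p(x,x) - p(y,y)
   together with the nonnegative 1-Lipschitz weight w(x) = p(x,x), through
   p(x,y) = (d(x,y) + w(x) + w(y))/2.  Embed (X,d) isometrically into the complete
   space of bounded real functions on X (Kuratowski) and extend w there in two ways:
   by its largest 1-Lipschitz extension inf_x (w(x) + D(t,x)), and by its smallest
   nonnegative one max(0, sup_x (w(x) - D(t,x))).  Both give p-Cauchy complete partial
   metric spaces containing X, and in the first one X is p-dense precisely because the
   weight is an infimum over X.  An isometry from the first to the second fixing X
   preserves the distances to the points of X, hence would force the two extensions to
   agree everywhere; they differ at a constant function lying far above every w(x). *)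

Record is_metric {T : Type} (D : T -> T -> R) : Prop := {
  metric_refl : forall a, D a a = 0;
  metric_sep : forall a b, D a b = 0 -> a = b;
  metric_sym : forall a b, D a b = D b a;
  metric_triangle : forall a b c, D a c <= D a b + D b c }.

Arguments metric_refl {T D} _ _.
Arguments metric_sep {T D} _ _ _ _.
Arguments metric_sym {T D} _ _ _.
Arguments metric_triangle {T D} _ _ _ _.

Lemma metric_ge0 {T : Type} (D : T -> T -> R) :
  is_metric D -> forall a b, 0 <= D a b.
Proof.
  intros hD a b. pose proof (metric_triangle hD a b a) as H.
  rewrite (metric_refl hD), (metric_sym hD b a) in H. lra.
Qed.

Definition metric_complete {T : Type} (D : T -> T -> R) : Prop :=
  forall u : nat -> T,
    (forall eps, 0 < eps -> exists N, forall n m,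
        (N <= n)%nat -> (N <= m)%nat -> D (u n) (u m) < eps) ->
    exists L, Un_cv (fun n => D L (u n)) 0.

Definition lipschitz1 {T : Type} (D : T -> T -> R) (W : T -> R) : Prop :=
  forall a b, W a - W b <= D a b.

(* Meaningful only when [h] is bounded above on a nonempty [I]; otherwise unspecified. *)
Definition supR {I : Type} (h : I -> R) : R :=
  epsilon (inhabits 0) (is_lub (fun r => exists z, r = h z)).

Definition infR {I : Type} (h : I -> R) : R := - supR (fun z => - h z).

Section Sup.
Context {I : Type} (h : I -> R).

Lemma supR_is_lub M :
  inhabited I -> (forall z, h z <= M) -> is_lub (fun r => exists z, r = h z) (supR h).
Proof.
  intros [i0] HM. unfold supR. apply epsilon_spec.
  destruct (completeness (fun r => exists z, r = h z)) as [m Hm].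
  - exists M. intros r [z ->]. apply HM.
  - exists (h i0), i0. reflexivity.
  - exists m. exact Hm.
Qed.

Lemma supR_ub M : (forall z, h z <= M) -> forall z, h z <= supR h.
Proof. intros HM z. apply (supR_is_lub M (inhabits z) HM). exists z. reflexivity. Qed.

Lemma supR_le b : inhabited I -> (forall z, h z <= b) -> supR h <= b.
Proof. intros hI Hb. apply (supR_is_lub b hI Hb). intros r [z ->]. apply Hb. Qed.

End Sup.

Section Inf.
Context {I : Type} (h : I -> R).

Lemma infR_lb m : (forall z, m <= h z) -> forall z, infR h <= h z.
Proof.
  intros Hm z. unfold infR.
  enough (- h z <= supR (fun z => - h z)) by lra.
  apply (supR_ub (fun z => - h z) (- m)). intro y. specialize (Hm y). lra.
Qed.

Lemma infR_ge b : inhabited I -> (forall z, b <= h z) -> b <= infR h.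
Proof.
  intros hI Hb. unfold infR.
  enough (supR (fun z => - h z) <= - b) by lra.
  apply supR_le; [exact hI|]. intro z. specialize (Hb z). lra.
Qed.

Lemma infR_approx eps : inhabited I -> 0 < eps -> exists z, h z < infR h + eps.
Proof.
  intros hI He. apply NNPP. intro Hn.
  enough (infR h + eps <= infR h) by lra.
  apply infR_ge; [exact hI|]. intro z. apply Rnot_lt_le. intro Hz. apply Hn. now exists z.
Qed.

End Inf.

Definition weighted_pmetric {T : Type} (D : T -> T -> R) (W : T -> R) (a b : T) : R :=
  (D a b + W a + W b) / 2.

Lemma weighted_pmetric_isometric {T U : Type} (d : T -> T -> R) (D : U -> U -> R)
  (w : T -> R) (W : U -> R) (e : T -> U) :
  (forall x y, D (e x) (e y) = d x y) -> (forall x, W (e x) = w x) ->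
  isometric_embedding (weighted_pmetric d w) (weighted_pmetric D W) e.
Proof. intros Hd Hw x y. unfold weighted_pmetric. now rewrite Hd, !Hw. Qed.

Section WeightedPartialMetric.
Context {T : Type} (D : T -> T -> R) (W : T -> R).
Hypothesis hD : is_metric D.
Hypothesis W_lip : lipschitz1 D W.

Lemma weighted_pmetric_diag a : weighted_pmetric D W a a = W a.
Proof. unfold weighted_pmetric. rewrite (metric_refl hD). lra. Qed.

Lemma weighted_pmetric_is_partial_metric :
  (forall a, 0 <= W a) -> is_partial_metric (weighted_pmetric D W).
Proof.
  intro W_ge0. pose proof (metric_ge0 D hD) as D_ge0.
  unfold weighted_pmetric; repeat split.
  - intros x y. pose proof (D_ge0 x y). pose proof (W_ge0 x). pose proof (W_ge0 y). lra.
  - intros x y H1 H2. rewrite (metric_refl hD) in H1, H2. apply (metric_sep hD). lra.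
  - intros x y. rewrite (metric_refl hD). pose proof (W_lip x y). lra.
  - intros x y. rewrite (metric_sym hD). lra.
  - intros x y z. rewrite (metric_refl hD). pose proof (metric_triangle hD x y z). lra.
Qed.

Lemma weighted_pmetric_Cauchy u :
  p_Cauchy (weighted_pmetric D W) u ->
  forall eps, 0 < eps -> exists N, forall n m,
    (N <= n)%nat -> (N <= m)%nat -> D (u n) (u m) < eps.
Proof.
  intros [a Ha] eps He. destruct (Ha (eps / 4)) as [N HN]; [lra|].
  exists N. intros n m Hn Hm.
  pose proof (HN n m Hn Hm) as Hnm. pose proof (HN n n Hn Hn) as Hnn.
  pose proof (HN m m Hm Hm) as Hmm.
  rewrite weighted_pmetric_diag in Hnn, Hmm. unfold weighted_pmetric in Hnm.
  apply Rabs_def2 in Hnm. apply Rabs_def2 in Hnn. apply Rabs_def2 in Hmm. lra.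
Qed.

(* Both [p(L, u n) - W L] and [W (u n) - W L] are bounded by [D L (u n)]. *)
Lemma weighted_pmetric_converges u L :
  Un_cv (fun n => D L (u n)) 0 -> p_converges (weighted_pmetric D W) u L.
Proof.
  intro HL. unfold p_converges. rewrite !weighted_pmetric_diag.
  split; intros eps He; destruct (HL eps He) as [N HN]; exists N; intros n Hn;
    specialize (HN n Hn); unfold Rdist in *;
    rewrite Rminus_0_r, Rabs_right in HN by (apply Rle_ge, metric_ge0, hD);
    pose proof (W_lip L (u n)); pose proof (W_lip (u n) L);
    rewrite (metric_sym hD (u n) L) in *; apply Rabs_def1;
    rewrite ?weighted_pmetric_diag; unfold weighted_pmetric; lra.
Qed.

Lemma weighted_pmetric_complete :
  metric_complete D -> p_Cauchy_complete (weighted_pmetric D W).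
Proof.
  intros HD u Hu. destruct (HD u (weighted_pmetric_Cauchy u Hu)) as [L HL].
  exists L. now apply weighted_pmetric_converges.
Qed.

End WeightedPartialMetric.

Definition pdist {X : Type} (p : X -> X -> R) (x y : X) : R := 2 * p x y - p x x - p y y.

Lemma weighted_pdist_diag {X : Type} (p : X -> X -> R) x y :
  weighted_pmetric (pdist p) (fun z => p z z) x y = p x y.
Proof. unfold weighted_pmetric, pdist. lra. Qed.

Section PartialMetricDecomposition.
Context {X : Type} (p : X -> X -> R).
Hypothesis hp : is_partial_metric p.

Lemma pdist_is_metric : is_metric (pdist p).
Proof.
  destruct hp as (_ & P1 & P2 & P3 & P4). unfold pdist. split.
  - intro x. lra.
  - intros x y H. pose proof (P2 x y). pose proof (P2 y x). rewrite (P3 y x) in *.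
    apply P1; lra.
  - intros x y. rewrite (P3 x y). lra.
  - intros x y z. pose proof (P4 x y z). lra.
Qed.

Lemma diag_lipschitz : lipschitz1 (pdist p) (fun x => p x x).
Proof. destruct hp as (_ & _ & P2 & _). intros x y. unfold pdist. pose proof (P2 x y). lra. Qed.

End PartialMetricDecomposition.

Definition bounded_fun (I : Type) : Type :=
  {f : I -> R | exists M, forall z, Rabs (f z) <= M}.

Definition sup_dist {I : Type} (f g : bounded_fun I) : R :=
  supR (fun z => Rabs (proj1_sig f z - proj1_sig g z)).

Definition const_fun {I : Type} (c : R) : bounded_fun I :=
  exist _ (fun _ => c) (ex_intro (fun M => forall _ : I, Rabs c <= M) (Rabs c)
                         (fun _ => Rle_refl _)).

Lemma uniformly_Cauchy_uniform_limit {I : Type} (u : nat -> I -> R) :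
  (forall eps, 0 < eps -> exists N, forall n m z,
      (N <= n)%nat -> (N <= m)%nat -> Rabs (u n z - u m z) < eps) ->
  exists L : I -> R, forall eps, 0 < eps -> exists N, forall n z,
      (N <= n)%nat -> Rabs (u n z - L z) < eps.
Proof.
  intro Hu.
  assert (Hc : forall z, Cauchy_crit (fun n => u n z)).
  { intros z eps He. destruct (Hu eps He) as [N HN]. exists N.
    intros n m Hn Hm. now apply HN. }
  exists (fun z => proj1_sig (R_complete _ (Hc z))).
  intros eps He. destruct (Hu (eps / 2)) as [N HN]; [lra|].
  exists N. intros n z Hn. destruct (R_complete _ (Hc z)) as [l Hl]; simpl.
  destruct (Hl (eps / 2)) as [N' HN']; [lra|].
  set (m := Nat.max N N').
  specialize (HN' m ltac:(lia)). specialize (HN n m z Hn ltac:(lia)). unfold Rdist in HN'.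
  replace (u n z - l) with ((u n z - u m z) + (u m z - l)) by ring.
  eapply Rle_lt_trans; [apply Rabs_triang | lra].
Qed.

Section BoundedFunctions.
Context {I : Type}.
Hypothesis hI : inhabited I.

Lemma bounded_fun_diff_bounded (f g : bounded_fun I) :
  exists M, forall z, Rabs (proj1_sig f z - proj1_sig g z) <= M.
Proof.
  destruct f as [f [M1 H1]], g as [g [M2 H2]]. exists (M1 + M2). intro z. simpl.
  unfold Rminus. eapply Rle_trans; [apply Rabs_triang|]. rewrite Rabs_Ropp.
  pose proof (H1 z). pose proof (H2 z). lra.
Qed.

Lemma sup_dist_ub (f g : bounded_fun I) z :
  Rabs (proj1_sig f z - proj1_sig g z) <= sup_dist f g.
Proof. destruct (bounded_fun_diff_bounded f g) as [M HM]. exact (supR_ub _ M HM z). Qed.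

Lemma sup_dist_le (f g : bounded_fun I) b :
  (forall z, Rabs (proj1_sig f z - proj1_sig g z) <= b) -> sup_dist f g <= b.
Proof. exact (supR_le _ b hI). Qed.

Lemma sup_dist_is_metric : is_metric (@sup_dist I).
Proof.
  destruct hI as [i0]. split.
  - intro f. apply Rle_antisym.
    + apply sup_dist_le. intro z. rewrite Rminus_diag_eq, Rabs_R0 by reflexivity. lra.
    + eapply Rle_trans; [apply Rabs_pos | apply (sup_dist_ub f f i0)].
  - intros f g H. apply eq_sig_hprop; [intros; apply proof_irrelevance|].
    apply functional_extensionality. intro z.
    pose proof (sup_dist_ub f g z). pose proof (Rle_abs (proj1_sig f z - proj1_sig g z)).
    pose proof (Rle_abs (proj1_sig g z - proj1_sig f z)) as Hgf.
    rewrite Rabs_minus_sym in Hgf. lra.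
  - intros f g. apply Rle_antisym; apply sup_dist_le; intro z;
      rewrite Rabs_minus_sym; apply sup_dist_ub.
  - intros f g h. apply sup_dist_le. intro z.
    replace (proj1_sig f z - proj1_sig h z)
      with ((proj1_sig f z - proj1_sig g z) + (proj1_sig g z - proj1_sig h z)) by ring.
    eapply Rle_trans; [apply Rabs_triang|].
    pose proof (sup_dist_ub f g z). pose proof (sup_dist_ub g h z). lra.
Qed.

Lemma sup_dist_complete : metric_complete (@sup_dist I).
Proof.
  intros u Hu.
  destruct (uniformly_Cauchy_uniform_limit (fun n => proj1_sig (u n))) as [L HL].
  { intros eps He. destruct (Hu eps He) as [N HN]. exists N. intros n m z Hn Hm.
    eapply Rle_lt_trans; [apply sup_dist_ub | now apply HN]. }
  assert (L_bounded : exists M, forall z, Rabs (L z) <= M).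
  { destruct (HL 1 Rlt_0_1) as [N HN]. destruct (proj2_sig (u N)) as [M HM].
    exists (M + 1). intro z. pose proof (HN N z (le_n _)). pose proof (HM z).
    replace (L z) with (proj1_sig (u N) z - (proj1_sig (u N) z - L z)) by ring.
    unfold Rminus at 1. eapply Rle_trans; [apply Rabs_triang|]. rewrite Rabs_Ropp. lra. }
  exists (exist _ L L_bounded). intros eps He.
  destruct (HL (eps / 2)) as [N HN]; [lra|]. exists N. intros n Hn.
  assert (sup_dist (exist _ L L_bounded) (u n) <= eps / 2).
  { apply sup_dist_le. intro z. simpl. rewrite Rabs_minus_sym. left. now apply HN. }
  pose proof (metric_ge0 _ sup_dist_is_metric (exist _ L L_bounded) (u n)).
  unfold Rdist. rewrite Rminus_0_r, Rabs_right; lra.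
Qed.

End BoundedFunctions.

Section Kuratowski.
Context {X : Type} (d : X -> X -> R).
Hypothesis hd : is_metric d.
Variable x0 : X.

Lemma kuratowski_bounded x : exists M, forall z, Rabs (d x z - d x0 z) <= M.
Proof.
  exists (d x x0). intro z. apply Rabs_le.
  pose proof (metric_triangle hd x x0 z). pose proof (metric_triangle hd x0 x z).
  rewrite (metric_sym hd x0 x) in *. lra.
Qed.

Definition kuratowski (x : X) : bounded_fun X := exist _ _ (kuratowski_bounded x).

Lemma sup_dist_kuratowski x y : sup_dist (kuratowski x) (kuratowski y) = d x y.
Proof.
  apply Rle_antisym.
  - apply (sup_dist_le (inhabits x0)). intro z. simpl. apply Rabs_le.
    pose proof (metric_triangle hd x y z). pose proof (metric_triangle hd y x z).
    rewrite (metric_sym hd y x) in *. lra.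
  - pose proof (sup_dist_ub (kuratowski x) (kuratowski y) y) as H. simpl in H.
    rewrite (metric_refl hd), Rabs_right in H; [lra|].
    pose proof (metric_ge0 d hd x y). lra.
Qed.

Lemma sup_dist_const_kuratowski c x :
  0 <= c -> c + d x0 x <= sup_dist (const_fun c) (kuratowski x).
Proof.
  intro Hc. pose proof (sup_dist_ub (const_fun c) (kuratowski x) x) as H. simpl in H.
  rewrite (metric_refl hd), Rabs_right in H; [lra|].
  pose proof (metric_ge0 d hd x0 x). lra.
Qed.

End Kuratowski.

Section WeightExtensions.
Context {T X : Type} (D : T -> T -> R) (e : X -> T) (w : X -> R).
Hypothesis hD : is_metric D.
Hypothesis hX : inhabited X.
Hypothesis w_ge0 : forall x, 0 <= w x.
Hypothesis w_lip : forall x y, w x - w y <= D (e x) (e y).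

Definition wmax (t : T) : R := infR (fun x => w x + D t (e x)).

Definition wmin (t : T) : R := Rmax 0 (supR (fun x => w x - D t (e x))).

Lemma wmax_lb t x : wmax t <= w x + D t (e x).
Proof.
  apply (infR_lb (fun z => w z + D t (e z)) 0). intro z. pose proof (w_ge0 z). pose proof (metric_ge0 D hD t (e z)). lra.
Qed.

Lemma wmax_ge0 t : 0 <= wmax t.
Proof.
  apply infR_ge; [exact hX|]. intro x.
  pose proof (w_ge0 x). pose proof (metric_ge0 D hD t (e x)). lra.
Qed.

Lemma wmax_lipschitz : lipschitz1 D wmax.
Proof.
  intros t s. enough (wmax t - D t s <= wmax s) by lra.
  apply infR_ge; [exact hX|]. intro x.
  pose proof (wmax_lb t x). pose proof (metric_triangle hD t s (e x)). lra.
Qed.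

Lemma wmax_extends y : wmax (e y) = w y.
Proof.
  apply Rle_antisym.
  - pose proof (wmax_lb (e y) y). rewrite (metric_refl hD) in *. lra.
  - apply infR_ge; [exact hX|]. intro x. pose proof (w_lip y x). lra.
Qed.

Lemma wmax_approx t eps : 0 < eps -> exists x, w x + D t (e x) < wmax t + eps.
Proof. exact (infR_approx _ eps hX). Qed.

Lemma wmin_sup_ub t x : w x - D t (e x) <= supR (fun z => w z - D t (e z)).
Proof.
  destruct hX as [x0]. apply (supR_ub (fun z => w z - D t (e z)) (w x0 + D t (e x0))). intro z.
  pose proof (w_lip z x0). pose proof (metric_triangle hD (e z) t (e x0)).
  rewrite (metric_sym hD (e z) t) in *. lra.
Qed.

Lemma wmin_ge0 t : 0 <= wmin t.
Proof. apply Rmax_l. Qed.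

Lemma wmin_lipschitz : lipschitz1 D wmin.
Proof.
  intros t s.
  assert (supR (fun x => w x - D t (e x)) <= supR (fun x => w x - D s (e x)) + D t s).
  { apply supR_le; [exact hX|]. intro x. pose proof (wmin_sup_ub s x).
    pose proof (metric_triangle hD s t (e x)). rewrite (metric_sym hD s t) in *. lra. }
  pose proof (metric_ge0 D hD t s). unfold wmin, Rmax.
  destruct (Rle_dec 0 _); destruct (Rle_dec 0 _); lra.
Qed.

Lemma wmin_extends y : wmin (e y) = w y.
Proof.
  assert (Hsup : supR (fun x => w x - D (e y) (e x)) = w y).
  { apply Rle_antisym.
    - apply supR_le; [exact hX|]. intro x. pose proof (w_lip x y) as H.
      rewrite (metric_sym hD) in H. lra.
    - pose proof (wmin_sup_ub (e y) y). rewrite (metric_refl hD) in *. lra. }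
  unfold wmin. rewrite Hsup. apply Rmax_right, w_ge0.
Qed.

Lemma wmin_lt_wmax t : (forall x, w x + 1 <= D t (e x)) -> wmin t < wmax t.
Proof.
  intro Hfar.
  assert (wmin t = 0).
  { apply Rmax_left. apply supR_le; [exact hX|]. intro x. pose proof (Hfar x). lra. }
  assert (1 <= wmax t).
  { apply infR_ge; [exact hX|]. intro x. pose proof (Hfar x). pose proof (w_ge0 x). lra. }
  lra.
Qed.

Lemma wmax_pdense : pdense (weighted_pmetric D wmax) (fun t => exists x, e x = t).
Proof.
  intros t eps He. destruct (wmax_approx t (2 * eps)) as [x Hx]; [lra|].
  exists (e x). split; [now exists x|].
  unfold pball. rewrite weighted_pmetric_diag by exact hD.
  unfold weighted_pmetric. rewrite wmax_extends. lra.
Qed.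

(* An isometry [ft] fixing [e X] keeps every distance [D t (e x)], and [wmin] only
   depends on these distances. *)
Lemma isometric_extension_wmin_eq_wmax (ft : T -> T) :
  isometric_embedding (weighted_pmetric D wmax) (weighted_pmetric D wmin) ft ->
  (forall x, ft (e x) = e x) -> forall t, wmin t = wmax t.
Proof.
  intros Hft Hfix t.
  assert (Hdiag : wmin (ft t) = wmax t).
  { pose proof (Hft t t) as H. now rewrite !weighted_pmetric_diag in H by exact hD. }
  assert (Hdist : forall x, D (ft t) (e x) = D t (e x)).
  { intro x. pose proof (Hft t (e x)) as H. rewrite Hfix in H.
    unfold weighted_pmetric in H. rewrite wmin_extends, wmax_extends in H. lra. }
  rewrite <- Hdiag. unfold wmin.
  now rewrite (functional_extensionality _ _ (fun x => f_equal (Rminus (w x)) (Hdist x))).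
Qed.

End WeightExtensions.

Theorem theorem1p9 (X : Type) (pX : X -> X -> R)
  (hpX : is_partial_metric pX) (hne : inhabited X) :
  exists (Xt : Type) (pXt : Xt -> Xt -> R) (j : X -> Xt),
    is_p_Cauchy_completion pX pXt j /\
    exists (Y : Type) (pY : Y -> Y -> R) (f : X -> Y),
      is_partial_metric pY /\ p_Cauchy_complete pY /\
      isometric_embedding pX pY f /\
      ~ (exists ft : Xt -> Y, isometric_embedding pXt pY ft /\
                              forall x, ft (j x) = f x).
Proof.
  destruct hne as [x0]. pose proof (inhabits x0) as hX.
  set (w := fun x => pX x x).
  set (e := kuratowski (pdist pX) (pdist_is_metric pX hpX) x0).
  set (D := @sup_dist X).
  assert (hD : is_metric D) by exact (sup_dist_is_metric hX).
  assert (D_complete : metric_complete D) by exact (sup_dist_complete hX).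
  assert (w_ge0 : forall x, 0 <= w x) by (intro; apply hpX).
  assert (w_lip : forall x y, w x - w y <= D (e x) (e y)).
  { intros x y. unfold D, e. rewrite sup_dist_kuratowski. now apply diag_lipschitz. }
  assert (e_iso : forall W, (forall x, W (e x) = w x) ->
            isometric_embedding pX (weighted_pmetric D W) e).
  { intros W HW x y. rewrite <- (weighted_pdist_diag pX x y).
    apply weighted_pmetric_isometric; [|exact HW]. apply sup_dist_kuratowski. }
  exists (bounded_fun X), (weighted_pmetric D (wmax D e w)), e.
  split; [split; [|split; [|split]]|].
  - apply weighted_pmetric_is_partial_metric; auto using wmax_lipschitz, wmax_ge0.
  - apply weighted_pmetric_complete; auto using wmax_lipschitz.
  - apply e_iso; auto using wmax_extends.
  - auto using wmax_pdense.
  - exists (bounded_fun X), (weighted_pmetric D (wmin D e w)), e.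
    split; [|split; [|split]].
    + apply weighted_pmetric_is_partial_metric; auto using wmin_lipschitz, wmin_ge0.
    + apply weighted_pmetric_complete; auto using wmin_lipschitz.
    + apply e_iso; auto using wmin_extends.
    + intros [ft [Hft Hfix]].
      set (c := const_fun (w x0 + 1) : bounded_fun X).
      assert (c_far : forall x, w x + 1 <= D c (e x)).
      { intro x. pose proof (w_ge0 x0) as Hw0.
        pose proof (diag_lipschitz pX hpX x x0) as Hlip.
        rewrite (metric_sym (pdist_is_metric pX hpX)) in Hlip.
        pose proof (sup_dist_const_kuratowski _ (pdist_is_metric pX hpX) x0 (w x0 + 1) x
                      ltac:(lra)).
        unfold D, c, e, w in *. lra. }
      pose proof (wmin_lt_wmax D e w hX w_ge0 c c_far).
      rewrite (isometric_extension_wmin_eq_wmax D e w hD hX w_ge0 w_lip ft Hft Hfix c) in *.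
      lra.
Qed.
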